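(* Let $G$ be an $n$-vertex graph, $f\ge 1$ and $p\ge 1$ integers, and run Algorithm 1 (described in the context) on $G$ with parameters $f,p$. Then the final source set satisfies $|S|\le \lfloor (f+1)n/p\rfloor$, and if $\gamma(n,\ell)$ is an upper bound on the number of edges of the sourcewise spanner $A_S$ whenever $|S|\le \ell$, the returned spanner $H$ has $O\bigl(np+nf+\gamma(n,\lfloor (f+1)n/p\rfloor)\bigr)$ edges.
   Context: Algorithm 1 (input: graph $G$, integers $f,p\ge1$, and a value $\beta$). Initially every vertex is colored white and has $\mathrm{counter}(v)=f+1$; $S=\emptyset$, $E'=\emptyset$. For a vertex $u$, let $N_w(u)$ be the set of currently white neighbors of $u$ and $\delta_w(u)=|N_w(u)|$. While there exists $s\in V\setminus S$ with $\delta_w(s)\ge p$: add $s$ to $S$, color $s$ red, and for each $u\in N_w(s)$ decrement $\mathrm{counter}(u)$, add edge $(s,u)$ to $E'$, and if $\mathrm{counter}(u)=0$ color $u$ black. After the loop, add to $E'$ every edge $(u,v)\in E(G)$ such that $u$ is white. Let $A_S$ be a $\beta$-additive $f$-EFT (resp. $f$-VFT) sourcewise spanner of $G$ with respect to $S$, i.e. a subgraph such that for every set $F$ of at most $f$ edges (resp. vertices) and every $s\in S$, $v\in V(G)$, $d_{A_S-F}(s,v)\le d_{G-F}(s,v)+\beta$. Return $H=(V(G),E'\cup E(A_S))$. *)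

From mathcomp Require Import all_boot.
Set Implicit Arguments. Unset Strict Implicit. Unset Printing Implicit Defensive.

(* A simple graph on a finite vertex type V is a symmetric irreflexive
   adjacency relation [adj]; an (undirected) edge {u,v} is represented by the
   2-element set [set u; v]; edge sets are {set {set V}}. *)

Section Alg.
Variable V : finType.
Variable adj : rel V.

Definition gedges : {set {set V}} :=
  [set [set u; v] | u in V, v in V & adj u v].

(* State of Algorithm 1: the source set S (= red vertices), the counters,
   and the edge set E'. A vertex is white iff it is not red and its counter
   is positive (black = not red, counter reached 0). *)
Record state := St { stS : {set V}; stcnt : V -> nat; stE : {set {set V}} }.

Definition white (st : state) (u : V) : bool :=
  (u \notin stS st) && (0 < stcnt st u).

Definition Nw (st : state) (u : V) : {set V} := [set v | adj u v & white st v].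

Definition init (f : nat) : state := St set0 (fun _ => f.+1) set0.

Definition step (st : state) (s : V) : state :=
  St (s |: stS st)
     (fun u => if u \in Nw st s then (stcnt st u).-1 else stcnt st u)
     (stE st :|: [set [set s; u] | u in Nw st s]).

Definition can_pick (p : nat) (st : state) (s : V) : bool :=
  (s \notin stS st) && (p <= #|Nw st s|).

Fixpoint run_from (p : nat) (st : state) (ss : seq V) : option state :=
  match ss with
  | [::] => Some st
  | s :: ss' => if can_pick p st s then run_from p (step st s) ss' else None
  end.

Definition terminal (p : nat) (st : state) : Prop := forall s, ~~ can_pick p st s.

Definition final_edges (st : state) : {set {set V}} :=
  stE st :|: [set [set u; v] | u in V, v in V & adj u v && white st u].

(* Distances: there is an s-v path of length <= k in the graph with edge set E
   after deleting the vertex set X (edges only between non-deleted vertices). *)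
Definition eadj (E : {set {set V}}) (X : {set V}) : rel V :=
  fun u v => [&& [set u; v] \in E, u != v, u \notin X & v \notin X].

Definition dist_le (E : {set {set V}}) (X : {set V}) (s v : V) (k : nat) : Prop :=
  exists q : seq V, [&& path (eadj E X) s q, last s q == v & size q <= k].

(* beta-additive f-EFT sourcewise spanner w.r.t. S:
   d_{A-F}(s,v) <= d_{G-F}(s,v) + beta for all |F| <= f edge faults *)
Definition EFT_sourcewise_spanner (f beta : nat) (S : {set V}) (A : {set {set V}}) : Prop :=
  A \subset gedges /\
  forall F : {set {set V}}, #|F| <= f -> forall s, s \in S -> forall v k,
    dist_le (gedges :\: F) set0 s v k -> dist_le (A :\: F) set0 s v (k + beta).

Definition VFT_sourcewise_spanner (f beta : nat) (S : {set V}) (A : {set {set V}}) : Prop :=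
  A \subset gedges /\
  forall F : {set V}, #|F| <= f -> forall s, s \in S -> forall v k,
    dist_le gedges F s v k -> dist_le A F s v (k + beta).

End Alg.

From mathcomp Require Import all_boot.
From mathcomp Require Import zify.
Set Implicit Arguments. Unset Strict Implicit.

(* Each loop iteration lowers the total counter sum by |N_w(s)| >= p and adds
   |N_w(s)| edges to E', so both p|S| and |E'| are paid for by the initial
   budget (f+1)n.  A white vertex u keeps red-neighbours + counter <= f+1,
   since every red neighbour of u decremented its counter when it was picked.
   At termination an edge with a white endpoint u is charged either to a
   non-source endpoint (< p white neighbours each) or, when the other endpoint
   is red, to u (at most f red neighbours, as its counter is still positive). *)

Lemma card_bigcup_le (I T : finType) (P : pred I) (F : I -> {set T}) :
  #|\bigcup_(i | P i) F i| <= \sum_(i | P i) #|F i|.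
Proof.
elim/big_rec2: _ => [|i y U _ IH]; first by rewrite cards0.
by apply: leq_trans (leq_card_setU _ _) _; rewrite leq_add2l.
Qed.

Lemma leq_sum_card_mul (T : finType) (P : pred T) (F : T -> nat) c :
  (forall x, P x -> F x <= c) -> \sum_(x | P x) F x <= #|T| * c.
Proof.
move=> leFc; apply: (@leq_trans (\sum_(x | P x) c)); first exact: leq_sum.
by rewrite sum_nat_const leq_mul2r max_card orbT.
Qed.

Section Algorithm1.
Variable V : finType.
Variable adj : rel V.
Hypothesis adj_sym : symmetric adj.
Variables f p : nat.

Definition red_nbrs (st : state V) u := [set y in stS st | adj u y].
Definition counter_sum (st : state V) := \sum_(u : V) stcnt st u.

Definition invariant (st : state V) :=
  [/\ p * #|stS st| + counter_sum st <= f.+1 * #|V|,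
      #|stE st| + counter_sum st <= f.+1 * #|V| &
      forall u, white st u -> #|red_nbrs st u| + stcnt st u <= f.+1].

Lemma invariant_init : invariant (init V f).
Proof.
rewrite /invariant /counter_sum /= sum_nat_const !cards0 muln0 add0n mulnC.
split=> // u _; suff -> : red_nbrs (init V f) u = set0 by rewrite cards0.
by apply/setP=> y; rewrite !inE.
Qed.

Lemma counter_sum_step st s :
  counter_sum (step adj st s) + #|Nw adj st s| = counter_sum st.
Proof.
rewrite /counter_sum /= -sum1_card [X in _ + X]big_mkcond -big_split /=.
apply: eq_bigr => u _; case: ifP => [|_]; last by rewrite addn0.
by rewrite inE => /and3P [_ _ cnt_gt0]; rewrite addn1 prednK.
Qed.

Lemma white_step st s u : white (step adj st s) u -> white st u.
Proof.
case/andP; rewrite /= in_setU1 negb_or => /andP [_ uS] cnt_gt0.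
rewrite /white uS /=; move: cnt_gt0; case: ifP => // _ /leq_trans; apply; exact: leq_pred.
Qed.

Lemma white_budget_step st s u :
  (forall u, white st u -> #|red_nbrs st u| + stcnt st u <= f.+1) ->
  white (step adj st s) u ->
  #|red_nbrs (step adj st s) u| + stcnt (step adj st s) u <= f.+1.
Proof.
move=> budget uw'; have uw := white_step uw'; have := budget u uw.
have cnt_gt0 : 0 < stcnt st u by case/andP: uw.
rewrite /=; case Hus: (adj u s).
- have -> : u \in Nw adj st s by rewrite inE adj_sym Hus uw.
  have : red_nbrs (step adj st s) u \subset s |: red_nbrs st u.
    by apply/subsetP => y; rewrite !inE => /andP [/orP [->|->] ->]; rewrite ?orbT.
  move/subset_leq_card; rewrite cardsU1; case: (s \notin _) => /=; lia.
- have -> : u \in Nw adj st s = false by rewrite inE adj_sym Hus.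
  have : red_nbrs (step adj st s) u \subset red_nbrs st u.
    apply/subsetP => y; rewrite !inE => /andP [/orP [/eqP ->|->] Huy] //.
    by rewrite Hus in Huy.
  move/subset_leq_card; lia.
Qed.

Lemma invariant_step st s : can_pick adj p st s -> invariant st -> invariant (step adj st s).
Proof.
move=> /andP [sS p_le] [sources edges budget].
have cnt := counter_sum_step st s.
split; last by move=> u; exact: white_budget_step.
- rewrite /= cardsU1 sS add1n mulnS; apply: leq_trans sources; rewrite -cnt; lia.
- apply: leq_trans edges; rewrite -cnt /=.
  apply: leq_trans (leq_add (leq_card_setU _ _) (leqnn _)) _.
  by rewrite -addnA leq_add2l addnC leq_add2l leq_imset_card.
Qed.

Lemma invariant_run ss st st' :
  invariant st -> run_from adj p st ss = Some st' -> invariant st'.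
Proof.
elim: ss st => [|s ss IH] st /=; first by move=> ? [<-].
by case: ifP => // pick inv; apply: IH; exact: invariant_step.
Qed.

Lemma card_sources_le st : invariant st -> 0 < p -> #|stS st| <= f.+1 * #|V| %/ p.
Proof. by move=> [sources _ _] p_gt0; rewrite leq_divRL // mulnC; lia. Qed.

Definition white_edges (st : state V) : {set {set V}} :=
  [set [set u; v] | u in V, v in V & adj u v && white st u].

Lemma white_edges_sub st :
  white_edges st \subset
    (\bigcup_(x | x \notin stS st) [set [set x; y] | y in Nw adj st x]) :|:
    (\bigcup_(x | white st x) [set [set x; y] | y in red_nbrs st x]).
Proof.
apply/subsetP => e /imset2P [u v _]; rewrite inE => /andP [_ /andP [Huv uw]] ->.
have uS : u \notin stS st by case/andP: uw.
rewrite inE; case vw: (white st v).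
  by apply/orP; left; apply/bigcupP; exists u => //; apply/imsetP; exists v; rewrite ?inE ?Huv.
case vS: (v \in stS st).
  by apply/orP; right; apply/bigcupP; exists u => //; apply/imsetP; exists v; rewrite ?inE ?vS.
apply/orP; left; apply/bigcupP; exists v; first by rewrite vS.
by apply/imsetP; exists u; rewrite 1?setUC // inE adj_sym Huv uw.
Qed.

Lemma card_white_edges_le st :
  invariant st -> terminal adj p st -> #|white_edges st| <= #|V| * p + #|V| * f.
Proof.
move=> [_ _ budget] term.
apply: leq_trans (subset_leq_card (white_edges_sub st)) _.
apply: leq_trans (leq_card_setU _ _) _.
apply: leq_add; apply: leq_trans (card_bigcup_le _ _) _;
  apply: leq_sum_card_mul => x Hx; apply: leq_trans (leq_imset_card _ _) _.
- by have := term x; rewrite /can_pick Hx -ltnNge => /ltnW.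
- by have := budget x Hx; case/andP: Hx => _ cnt_gt0; lia.
Qed.

End Algorithm1.

Theorem lemma1 :
  exists c : nat,
  forall (V : finType) (adj : rel V), symmetric adj -> irreflexive adj ->
  forall f p : nat, 1 <= f -> 1 <= p ->
  forall (ss : seq V) (st : state V),
    run_from adj p (init V f) ss = Some st -> terminal adj p st ->
    #|stS st| <= (f.+1 * #|V|) %/ p /\
    forall (beta : nat) (gamma : nat -> nat -> nat) (A : {set {set V}}),
      (EFT_sourcewise_spanner adj f beta (stS st) A \/
       VFT_sourcewise_spanner adj f beta (stS st) A) ->
      (forall l, #|stS st| <= l -> #|A| <= gamma #|V| l) ->
      #|final_edges adj st :|: A|
        <= c * (#|V| * p + #|V| * f + gamma #|V| ((f.+1 * #|V|) %/ p)).
Proof.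
exists 3 => V adj adj_sym _ f p f_ge1 p_ge1 ss st run term.
have inv : invariant adj f p st := invariant_run adj_sym (invariant_init adj f p) run.
have sources := card_sources_le inv p_ge1.
split=> // beta gamma A _ gammaA; have cardA := gammaA _ sources.
have white := card_white_edges_le adj_sym inv term.
have n_le_nf : #|V| <= #|V| * f by rewrite leq_pmulr.
case: inv => _ edges _.
apply: leq_trans (leq_card_setU _ _) _.
apply: leq_trans (leq_add (leq_card_setU _ _) (leqnn _)) _.
rewrite -/(white_edges adj st).
move: edges white cardA n_le_nf; set g := gamma _ _; set n := #|V|.
set E := #|stE st|; set W := #|white_edges _ _|; set a := #|A|; nia.
Qed.
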